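(* Let $b\ge 1$ and let $G$ be a graph having a proper intersection representation with axis-parallel boxes in $\mathbb{R}^b$. Then the 1-subdivision of $G$ (obtained by replacing every edge by a path of length 2) belongs to $(b+1)$-CBU.
   Context: An intersection representation of $G$ by axis-parallel boxes (products of closed intervals of positive length) in $\mathbb{R}^b$ assigns a box to each vertex so that two distinct vertices are adjacent iff their boxes intersect; it is proper if two boxes intersect if and only if some point of $\mathbb{R}^b$ belongs to these two boxes and to no other box of the representation. Let $e_1,\ldots,e_d$ be the standard basis of $\mathbb{R}^d$. For $d\ge 1$, a graph belongs to $d$-CBU if one can assign to each vertex an axis-parallel box in $\mathbb{R}^d$ such that the boxes have pairwise disjoint interiors, two distinct vertices are adjacent iff their boxes intersect, and any two intersecting boxes intersect in a $(d-1)$-dimensional box orthogonal to $e_1$. *)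

From Stdlib Require Import Reals.
From mathcomp Require Import all_boot.
Set Implicit Arguments. Unset Strict Implicit. Unset Printing Implicit Defensive.

Local Open Scope R_scope.

Definition point (d : nat) := 'I_d -> R.

Record box (d : nat) := Box {
  blo : 'I_d -> R;
  bhi : 'I_d -> R;
  bpos : forall i, blo i < bhi i }.

Definition in_box d (B : box d) (p : point d) : Prop :=
  forall i, blo B i <= p i <= bhi B i.

Definition in_interior d (B : box d) (p : point d) : Prop :=
  forall i, blo B i < p i < bhi B i.

Definition boxes_meet d (B C : box d) : Prop :=
  exists p, in_box B p /\ in_box C p.

Definition simple_graph (V : finType) (adj : rel V) : Prop :=
  symmetric adj /\ irreflexive adj.

Definition box_intersection_rep (T : Type) (adj : T -> T -> Prop) (b : nat)
    (f : T -> box b) : Prop :=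
  forall u v, u <> v -> (adj u v <-> boxes_meet (f u) (f v)).

Definition proper_box_rep (T : Type) (adj : T -> T -> Prop) (b : nat)
    (f : T -> box b) : Prop :=
  box_intersection_rep adj f /\
  forall u v, u <> v ->
    (boxes_meet (f u) (f v) <->
     exists p, in_box (f u) p /\ in_box (f v) p /\
               forall w, w <> u -> w <> v -> ~ in_box (f w) p).

Definition is_box_orth_e1 (d : nat) (i0 : 'I_d) (S : point d -> Prop) : Prop :=
  exists (c : R) (a bb : 'I_d -> R),
    (forall i, i != i0 -> a i < bb i) /\
    forall p, S p <-> (p i0 = c /\ forall i, i != i0 -> a i <= p i <= bb i).

(** d-CBU (d >= 1, stated for d = n.+1 so that e_1 exists; ord0 is e_1). *)
Definition CBU (n : nat) (T : Type) (adj : T -> T -> Prop) : Prop :=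
  exists f : T -> box n.+1,
    (forall u v, u <> v -> ~ exists p, in_interior (f u) p /\ in_interior (f v) p) /\
    (forall u v, u <> v -> (adj u v <-> boxes_meet (f u) (f v))) /\
    (forall u v, u <> v -> boxes_meet (f u) (f v) ->
       is_box_orth_e1 ord0 (fun p => in_box (f u) p /\ in_box (f v) p)).

(** 1-subdivision: vertices are the original vertices plus one new vertex per
    edge (an edge being a 2-set {u,v} with u ~ v); the new vertex of edge e is
    adjacent exactly to the two endpoints of e. *)
Definition is_edge (V : finType) (adj : rel V) (e : {set V}) : bool :=
  [exists u, exists v, adj u v && (e == [set u; v])].

Definition subdiv_vertex (V : finType) (adj : rel V) : Type :=
  (V + {e : {set V} | is_edge adj e})%type.

Definition subdiv_adj (V : finType) (adj : rel V)
    (x y : subdiv_vertex adj) : Prop :=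
  match x, y with
  | inl u, inr e => u \in sval e
  | inr e, inl u => u \in sval e
  | _, _ => False
  end.

From Stdlib Require Import Reals Lra Classical ClassicalEpsilon FunctionalExtensionality.
From mathcomp Require Import all_boot zify.
Set Implicit Arguments. Unset Strict Implicit. Unset Printing Implicit Defensive.
Local Open Scope R_scope.

(* Stack the picture along a new first axis.  With an injective rank r on
   the vertices, vertex v gets the slab [2 r_v, 2 r_v + 1] x f(v).  For an
   edge uv with r_u < r_v, properness yields a point q_uv lying in f(u) and
   f(v) and in no other box; the subdivision vertex of uv gets
   [2 r_u + 1, 2 r_v] x (a small cube around q_uv).  It touches the slabs of
   u and v along facets orthogonal to e_1, and once the cubes are small
   enough they miss every other box f(w) and each other, since distinct
   edges have distinct private points. *)

Lemma Rmax_Rmin_bounds (a a' c c' x : R) :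
  Rmax a a' <= x <= Rmin c c' <-> a <= x <= c /\ a' <= x <= c'.
Proof. by rewrite /Rmax /Rmin; do 2 case: Rle_dec; split=> ?; lra. Qed.

Section Boxes.
Variable n : nat.
Implicit Types (B C : box n) (p : point n).

Lemma boxes_meetP B C :
  boxes_meet B C <-> forall i, blo B i <= bhi C i /\ blo C i <= bhi B i.
Proof.
split=> [[p [pB pC]] i | overlap].
  by have := pB i; have := pC i; lra.
exists (fun i => Rmax (blo B i) (blo C i)); split=> i;
  have := overlap i; have := bpos B i; have := bpos C i;
  by rewrite /Rmax; case: Rle_dec; lra.
Qed.

Lemma boxes_meet_sym B C : boxes_meet B C -> boxes_meet C B.
Proof. by move=> [p [pB pC]]; exists p. Qed.

Lemma interiors_disjoint_of_not_meet B C :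
  ~ boxes_meet B C -> ~ exists p, in_interior B p /\ in_interior C p.
Proof.
move=> apart [p [pB pC]]; apply: apart; exists p.
by split=> i; [have := pB i | have := pC i]; lra.
Qed.

Definition facet_adjacent (i0 : 'I_n) B C :=
  (bhi B i0 = blo C i0 \/ bhi C i0 = blo B i0) /\
  forall i, i != i0 -> blo B i < bhi C i /\ blo C i < bhi B i.

Lemma facet_adjacent_sym i0 B C :
  facet_adjacent i0 B C -> facet_adjacent i0 C B.
Proof. by move=> [touch overlap]; split=> [|i /overlap]; lra. Qed.

Lemma facet_adjacent_meet i0 B C : facet_adjacent i0 B C -> boxes_meet B C.
Proof.
move=> [touch overlap]; apply/boxes_meetP => i.
have := bpos B i; have := bpos C i.
by case: (eqVneq i i0) => [->|/overlap]; lra.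
Qed.

Lemma facet_adjacent_interiors_disjoint i0 B C :
  facet_adjacent i0 B C -> ~ exists p, in_interior B p /\ in_interior C p.
Proof. by move=> [touch _] [p [pB pC]]; have := pB i0; have := pC i0; lra. Qed.

Lemma facet_adjacent_orth i0 B C :
  facet_adjacent i0 B C -> is_box_orth_e1 i0 (fun p => in_box B p /\ in_box C p).
Proof.
move=> [touch overlap].
have [c facet] : exists c, forall x,
    (blo B i0 <= x <= bhi B i0 /\ blo C i0 <= x <= bhi C i0) <-> x = c.
  have := bpos B i0; have := bpos C i0.
  by case: touch => E; [exists (bhi B i0) | exists (bhi C i0)] => x; split=> ?; lra.
exists c, (fun i => Rmax (blo B i) (blo C i)), (fun i => Rmin (bhi B i) (bhi C i)).
split=> [i /overlap [BC CB] | p].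
  by apply: Rmax_lub_lt; apply: Rmin_glb_lt => //; apply: bpos.
split=> [[pB pC] | [/facet [B_i0 C_i0] p_facet]].
  by split=> [|i _]; [apply/facet | apply/Rmax_Rmin_bounds]; (split; [apply: pB | apply: pC]).
by split=> i; case: (eqVneq i i0) => [-> // | /p_facet /Rmax_Rmin_bounds [] //].
Qed.

Lemma cube_bpos p r : 0 < r -> forall i, p i - r < p i + r.
Proof. by move=> r_pos i; lra. Qed.

Definition cube p r (r_pos : 0 < r) : box n := Box (cube_bpos p r_pos).

Lemma cube_overlap B p r (r_pos : 0 < r) : in_box B p ->
  forall i, blo B i < bhi (cube p r_pos) i /\ blo (cube p r_pos) i < bhi B i.
Proof. by move=> pB i /=; have := pB i; lra. Qed.

Lemma cube_apart_box B p : ~ in_box B p ->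
  exists e, 0 < e /\ forall r, r <= e -> forall r_pos : 0 < r,
    ~ boxes_meet (cube p r_pos) B.
Proof.
move=> /not_all_ex_not [i p_out].
have [below|above] : p i < blo B i \/ bhi B i < p i.
  by apply: NNPP => H; apply: p_out; lra.
- exists ((blo B i - p i) / 2); split=> [|r r_le r_pos /boxes_meetP /(_ i) /=]; lra.
- exists ((p i - bhi B i) / 2); split=> [|r r_le r_pos /boxes_meetP /(_ i) /=]; lra.
Qed.

Lemma cubes_apart p p' : p <> p' ->
  exists e, 0 < e /\ forall r, r <= e -> forall r_pos : 0 < r,
    ~ boxes_meet (cube p r_pos) (cube p' r_pos).
Proof.
move=> pp'; have [i /Rdichotomy [lt|gt]] : exists i, p i <> p' i.
  by apply: not_all_ex_not => H; apply: pp'; apply: functional_extensionality.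
- exists ((p' i - p i) / 3); split=> [|r r_le r_pos /boxes_meetP /(_ i) /=]; lra.
- exists ((p i - p' i) / 3); split=> [|r r_le r_pos /boxes_meetP /(_ i) /=]; lra.
Qed.

End Boxes.

Lemma finite_uniform_threshold (T : finType) (P : T -> R -> Prop) :
  (forall t, exists e, 0 < e /\ forall r, r <= e -> P t r) ->
  exists e, 0 < e /\ forall t r, r <= e -> P t r.
Proof.
move=> threshold.
suff [e [e_pos small]] : exists e, 0 < e /\
    forall t, t \in enum T -> forall r, r <= e -> P t r.
  by exists e; split=> // t; apply: small; rewrite mem_enum.
elim: (enum T) => [|t s [e [e_pos small]]]; first by exists 1; split=> //; lra.
have [et [et_pos small_t]] := threshold t.
exists (Rmin e et); split=> [|t']; first exact: Rmin_pos.
rewrite in_cons => /orP [/eqP -> | t's] r r_le.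
  by apply: small_t; have := Rmin_r e et; lra.
by apply: small => //; have := Rmin_l e et; lra.
Qed.

Lemma small_cubes_isolated (I J : finType) n (q : I -> point n) (B : J -> box n) :
  injective q ->
  exists r (r_pos : 0 < r),
    (forall i j, ~ in_box (B j) (q i) -> ~ boxes_meet (cube (q i) r_pos) (B j)) /\
    (forall i i', i <> i' -> ~ boxes_meet (cube (q i) r_pos) (cube (q i') r_pos)).
Proof.
move=> q_inj.
have [|e1 [e1_pos far]] := finite_uniform_threshold (P := fun (t : I * J) r =>
  ~ in_box (B t.2) (q t.1) -> forall r_pos : 0 < r, ~ boxes_meet (cube (q t.1) r_pos) (B t.2)).
  move=> [i j] /=; case: (classic (in_box (B j) (q i))) => [qB|].
    by exists 1; split; [lra | move=> r _ /(_ qB)].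
  by move=> /cube_apart_box [e [e_pos far]]; exists e; split=> // r /far.
have [|e2 [e2_pos sep]] := finite_uniform_threshold (P := fun (t : I * I) r =>
  t.1 <> t.2 -> forall r_pos : 0 < r,
    ~ boxes_meet (cube (q t.1) r_pos) (cube (q t.2) r_pos)).
  move=> [i i'] /=; case: (classic (i = i')) => [-> | /(contra_not (@q_inj i i'))].
    by exists 1; split; [lra | move=> r _ []].
  by move=> /cubes_apart [e [e_pos sep]]; exists e; split=> // r /sep.
have r_pos : 0 < Rmin e1 e2 by apply: Rmin_pos.
exists (Rmin e1 e2), r_pos; split.
  by move=> i j out; apply: (far (i, j) _ (Rmin_l e1 e2) out).
by move=> i i' ii'; apply: (sep (i, i') _ (Rmin_r e1 e2) ii').
Qed.

Section Prism.
Variables (n : nat) (l h : R) (lh : l < h) (B : box n).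

Definition prism : box n.+1.
Proof.
refine (@Box n.+1 (fun i => if unlift ord0 i is Some j then blo B j else l)
                  (fun i => if unlift ord0 i is Some j then bhi B j else h) _).
by move=> i; case: (unlift ord0 i) => [j|] //; apply: bpos.
Defined.

Lemma prism_lo0 : blo prism ord0 = l. Proof. by rewrite /= unlift_none. Qed.
Lemma prism_hi0 : bhi prism ord0 = h. Proof. by rewrite /= unlift_none. Qed.
Lemma prism_loS j : blo prism (lift ord0 j) = blo B j. Proof. by rewrite /= liftK. Qed.
Lemma prism_hiS j : bhi prism (lift ord0 j) = bhi B j. Proof. by rewrite /= liftK. Qed.

End Prism.

Lemma prism_meetP n l h l' h' (lh : l < h) (lh' : l' < h') (B C : box n) :
  boxes_meet (prism lh B) (prism lh' C) <-> (l <= h' /\ l' <= h) /\ boxes_meet B C.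
Proof.
rewrite !boxes_meetP; split=> [meet | [meet0 meet] i].
  split=> [|j]; [have := meet ord0 | have := meet (lift ord0 j)];
  by rewrite ?prism_lo0 ?prism_hi0 ?prism_loS ?prism_hiS.
case: (unliftP ord0 i) => [j|] ->;
  by rewrite ?prism_lo0 ?prism_hi0 ?prism_loS ?prism_hiS.
Qed.

Lemma prism_facet_adjacent n l h l' h' (lh : l < h) (lh' : l' < h') (B C : box n) :
  h = l' \/ h' = l ->
  (forall j, blo B j < bhi C j /\ blo C j < bhi B j) ->
  facet_adjacent ord0 (prism lh B) (prism lh' C).
Proof.
move=> touch overlap; split; first by rewrite !prism_lo0 !prism_hi0.
move=> i; case: (unliftP ord0 i) => [j ->|->]; last by rewrite eqxx.
by rewrite !prism_loS !prism_hiS.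
Qed.

Lemma CBU_of_facet_dichotomy n (T : Type) (adjT : T -> T -> Prop) (F : T -> box n.+1) :
  (forall s t, s <> t ->
     adjT s t /\ facet_adjacent ord0 (F s) (F t) \/
     ~ adjT s t /\ ~ boxes_meet (F s) (F t)) ->
  CBU n adjT.
Proof.
move=> dichotomy; exists F; split; [|split] => s t /dichotomy [[st facet] | [nst apart]].
- exact: facet_adjacent_interiors_disjoint facet.
- exact: interiors_disjoint_of_not_meet.
- by split=> // _; apply: facet_adjacent_meet facet.
- by split=> [/nst | /apart].
- by move=> _; apply: facet_adjacent_orth.
- by move/apart.
Qed.

Lemma INR_lt_nat (m k : nat) : (m < k)%N -> INR m < INR k.
Proof. by move/ltP; apply: lt_INR. Qed.

Section SubdivisionBoxes.
Variables (V : finType) (adj : rel V) (b : nat) (f : V -> box b).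
Local Notation edge := {e : {set V} | is_edge adj e}.

Variable q : edge -> point b.
Hypothesis q_private : forall x w, in_box (f w) (q x) <-> w \in sval x.

Variables (rank : V -> nat) (ends : edge -> V * V).
Hypothesis ends_spec : forall x,
  sval x = [set (ends x).1; (ends x).2] /\ (rank (ends x).1 < rank (ends x).2)%N.
Hypothesis rank_inj : injective rank.

Variables (eps : R) (eps_pos : 0 < eps).
Hypothesis cube_avoids :
  forall x w, ~ in_box (f w) (q x) -> ~ boxes_meet (cube (q x) eps_pos) (f w).
Hypothesis cubes_disjoint :
  forall x y, x <> y -> ~ boxes_meet (cube (q x) eps_pos) (cube (q y) eps_pos).

Lemma edge_slab_lt (x : edge) : ((2 * rank (ends x).1).+1 < 2 * rank (ends x).2)%N.
Proof. by have [_ lt] := ends_spec x; lia. Qed.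

Definition vertex_box v := prism (INR_lt_nat (ltnSn (2 * rank v))) (f v).
Definition edge_box x := prism (INR_lt_nat (edge_slab_lt x)) (cube (q x) eps_pos).

Definition subdiv_box (s : subdiv_vertex adj) : box b.+1 :=
  match s with inl v => vertex_box v | inr x => edge_box x end.

Lemma vertex_boxes_apart u v : u <> v -> ~ boxes_meet (vertex_box u) (vertex_box v).
Proof.
move=> uv; rewrite prism_meetP => -[[/INR_le/leP le_uv /INR_le/leP le_vu] _].
by apply: uv; apply: rank_inj; lia.
Qed.

Lemma edge_boxes_apart (x y : edge) : x <> y -> ~ boxes_meet (edge_box x) (edge_box y).
Proof. by move=> xy; rewrite prism_meetP => -[_]; apply: cubes_disjoint. Qed.

Lemma vertex_edge_boxes_apart w (x : edge) :
  w \notin sval x -> ~ boxes_meet (vertex_box w) (edge_box x).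
Proof.
move=> /negP wx; rewrite prism_meetP => -[_ /boxes_meet_sym].
by apply: cube_avoids; rewrite q_private.
Qed.

Lemma vertex_edge_facet_adjacent w (x : edge) :
  w \in sval x -> facet_adjacent ord0 (vertex_box w) (edge_box x).
Proof.
move=> wx; apply: prism_facet_adjacent; last by apply/cube_overlap/q_private.
by move: wx; case: (ends_spec x) => -> _; rewrite in_set2 => /orP[]/eqP->;
  [left | right].
Qed.

Lemma subdiv_box_dichotomy s t : s <> t ->
  subdiv_adj s t /\ facet_adjacent ord0 (subdiv_box s) (subdiv_box t) \/
  ~ subdiv_adj s t /\ ~ boxes_meet (subdiv_box s) (subdiv_box t).
Proof.
case: s t => [u|x] [v|y] st /=.
- by right; split=> //; apply: vertex_boxes_apart => uv; apply: st; rewrite uv.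
- case: (boolP (u \in sval y)) => uy; [left | right; split; first exact/negP].
    by split=> //; apply: vertex_edge_facet_adjacent.
  exact: vertex_edge_boxes_apart.
- case: (boolP (v \in sval x)) => vx; [left | right; split; first exact/negP].
    by split=> //; apply/facet_adjacent_sym/vertex_edge_facet_adjacent.
  by move/boxes_meet_sym; apply: vertex_edge_boxes_apart.
- by right; split=> //; apply: edge_boxes_apart => xy; apply: st; rewrite xy.
Qed.

End SubdivisionBoxes.

Section EdgeData.
Variables (V : finType) (adj : rel V).
Hypothesis adj_irr : irreflexive adj.
Local Notation edge := {e : {set V} | is_edge adj e}.

Lemma edge_endpoints (x : edge) : exists u v, u <> v /\ adj u v /\ sval x = [set u; v].
Proof.
case: x => e /= /existsP [u /existsP [v /andP [uv /eqP ->]]].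
by exists u, v; split=> // E; move: uv; rewrite E adj_irr.
Qed.

Lemma private_edge_points b (f : V -> box b) :
  proper_box_rep (fun u v => adj u v) f ->
  exists q : edge -> point b, forall x w, in_box (f w) (q x) <-> w \in sval x.
Proof.
move=> [rep proper].
apply: (choice (fun (x : edge) p => forall w, in_box (f w) p <-> w \in sval x)) => x.
have [u [v [uv [adj_uv ->]]]] := edge_endpoints x.
have [p [pu [pv others]]] := proj1 (proper u v uv) (proj1 (rep u v uv) adj_uv).
exists p => w; rewrite in_set2; split=> [pw | /orP[]/eqP-> //].
have [// | /eqP wu] := eqVneq w u; have [// | /eqP wv] := eqVneq w v.
by case: (others w wu wv).
Qed.

Lemma private_point_inj b (f : V -> box b) (q : edge -> point b) :
  (forall x w, in_box (f w) (q x) <-> w \in sval x) -> injective q.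
Proof.
move=> q_private x y qxy; apply: val_inj; apply/setP => w.
by apply/idP/idP; rewrite -!q_private qxy.
Qed.

Lemma ranked_edge_ends (rank : V -> nat) : injective rank ->
  exists ends : edge -> V * V, forall x,
    sval x = [set (ends x).1; (ends x).2] /\ (rank (ends x).1 < rank (ends x).2)%N.
Proof.
move=> rank_inj.
apply: (choice (fun (x : edge) (uv : V * V) =>
  sval x = [set uv.1; uv.2] /\ (rank uv.1 < rank uv.2)%N)) => x.
have [u [v [uv [_ ->]]]] := edge_endpoints x.
case: (ltngtP (rank u) (rank v)) => [lt | gt | /rank_inj //].
  by exists (u, v).
by exists (v, u); rewrite setUC.
Qed.

End EdgeData.

Theorem mainTheorem2 (b : nat) (hb : (1 <= b)%nat) (V : finType) (adj : rel V)
  (hG : simple_graph adj)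
  (hrep : exists f : V -> box b, proper_box_rep (fun u v => adj u v) f) :
  CBU b (@subdiv_adj V adj).
Proof.
have [_ adj_irr] := hG; have [f frep] := hrep.
have [q q_private] := private_edge_points adj_irr frep.
have rank_inj : injective (fun v : V => val (enum_rank v)).
  by move=> u v /val_inj /enum_rank_inj.
have [ends ends_spec] := ranked_edge_ends adj_irr rank_inj.
have [eps [eps_pos [cube_avoids cubes_disjoint]]] :=
  small_cubes_isolated f (private_point_inj q_private).
apply: CBU_of_facet_dichotomy.
exact: (subdiv_box_dichotomy q_private ends_spec rank_inj cube_avoids cubes_disjoint).
Qed.
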